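(* Let $\Gamma\neq\{e\}$ be a finite subgroup of $SL(2,\mathbf{C})$, $k\in\mathbf{C}$, $c$ a complex class function on $\Gamma\setminus\{e\}$. Let $M$ be an $H_{1,k,c}(\mathbf{\Gamma}_N)$-module such that the restriction of $M$ to $\mathbf{\Gamma}_N$ is irreducible. Then the generators $x_i$, $y_i$ act by zero on $M$ for every $i=1,\dots,N$.
   Context: Let $L$ be a $2$-dimensional complex vector space with symplectic form $\omega_L$ and symplectic basis $x,y$; $\Gamma\subset Sp(L)=SL(2,\mathbf{C})$ finite. Let $V=L^{\oplus N}$, with $x_i,y_i$ (and $u_i$ for $u\in L$) the copies in the $i$-th summand. $\mathbf{\Gamma}_N=S_N\ltimes\Gamma^N$ (with $S_N$ permuting the factors) acts naturally on $V$; $\gamma_i$ denotes $\gamma\in\Gamma$ placed in the $i$-th factor of $\Gamma^N$, $s_{ij}\in S_N$ the transposition. $H_{1,k,c}(\mathbf{\Gamma}_N)$ is the quotient of the smash product $\mathbf{\Gamma}_N\sharp TV$ by the relations: for each $i$, $[x_i,y_i]=1+\frac{k}{2}\sum_{j\neq i}\sum_{\gamma\in\Gamma}s_{ij}\gamma_i\gamma_j^{-1}+\sum_{\gamma\in\Gamma\setminus\{e\}}c_\gamma\gamma_i$; and for $u,v\in L$, $i\neq j$: $[u_i,v_j]=-\frac{k}{2}\sum_{\gamma\in\Gamma}\omega_L(\gamma u,v)s_{ij}\gamma_i\gamma_j^{-1}$. *)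

From HB Require Import structures.
From mathcomp Require Import all_boot all_order all_algebra all_fingroup.
From mathcomp Require Import complex reals.
Set Implicit Arguments. Unset Strict Implicit. Unset Printing Implicit Defensive.
Import GRing.Theory.
Local Open Scope ring_scope.

(* L = C^2 as column vectors, symplectic basis x = e_0, y = e_1. *)

Definition omegaL (C : comNzRingType) (u v : 'cV[C]_2) : C :=
  u ord0 ord0 * v ord_max ord0 - u ord_max ord0 * v ord0 ord0.

(* Action of u_i (u in L, i-th copy) given the actions X i = x_i, Y i = y_i:
   u_i = u_x x_i + u_y y_i. *)
Definition Lop (C : comNzRingType) (M : lmodType C) (N : nat)
  (X Y : 'I_N -> M -> M) (i : 'I_N) (u : 'cV[C]_2) (m : M) : M :=
  u ord0 ord0 *: X i m + u ord_max ord0 *: Y i m.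

(* D i g = action of g placed in the i-th factor of Gamma^N (gamma_i),
   P s = action of s in S_N. These are the defining relations of the
   wreath product S_N |x Gamma^N (mathcomp convention (s*t) x = t (s x),
   hence the conjugation rule P s D_(s i) = D_i P s). *)
Definition is_GammaN_rep (C : comNzRingType) (M : lmodType C) (N : nat)
  (gT : finGroupType) (G : {group gT})
  (D : 'I_N -> gT -> {linear M -> M}) (P : 'S_N -> {linear M -> M}) : Prop :=
  (forall i m, D i 1%g m = m) /\
      (forall i, {in G &, forall g h, forall m, D i (g * h)%g m = D i g (D i h m)}) /\
      (forall i j, i != j -> {in G &, forall g h, forall m,
           D i g (D j h m) = D j h (D i g m)}) /\
      (forall m, P 1%g m = m) /\
      (forall s t m, P (s * t)%g m = P s (P t m)) /\
      (forall s i, {in G, forall g m, P s (D (s i) g m) = D i g (P s m)}).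

Definition is_subspace (C : comNzRingType) (M : lmodType C) (S : M -> Prop) : Prop :=
  S 0 /\ forall (a : C) u v, S u -> S v -> S (a *: u + v).

(* M restricted to Gamma_N is irreducible: M <> 0 and the only subspaces
   stable under all of Gamma_N (equivalently under its generators
   gamma_i, s) are 0 and M. *)
Definition GammaN_irreducible (C : comNzRingType) (M : lmodType C) (N : nat)
  (gT : finGroupType) (G : {group gT})
  (D : 'I_N -> gT -> {linear M -> M}) (P : 'S_N -> {linear M -> M}) : Prop :=
  (exists m : M, m <> 0) /\
  forall S : M -> Prop, is_subspace S ->
    (forall i g m, g \in G -> S m -> S (D i g m)) ->
    (forall s m, S m -> S (P s m)) ->
    (forall m, S m -> m = 0) \/ (forall m, S m).

(* The relations of the smash product Gamma_N # TV: g u_i g^-1 = (g.u)_i *)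
Definition smash_relations (C : comNzRingType) (M : lmodType C) (N : nat)
  (gT : finGroupType) (G : {group gT}) (rho : gT -> 'M[C]_2)
  (D : 'I_N -> gT -> {linear M -> M}) (P : 'S_N -> {linear M -> M})
  (X Y : 'I_N -> {linear M -> M}) : Prop :=
  (forall i j g u m, g \in G ->
     D j g (Lop (fun l => X l) (fun l => Y l) i u m) =
     Lop (fun l => X l) (fun l => Y l) i (if i == j then rho g *m u else u) (D j g m)) /\
  (forall s i u m,
     P s (Lop (fun l => X l) (fun l => Y l) (s i) u m) =
     Lop (fun l => X l) (fun l => Y l) i u (P s m)).

Definition H_relations (C : fieldType) (M : lmodType C) (N : nat)
  (gT : finGroupType) (G : {group gT}) (rho : gT -> 'M[C]_2) (k : C) (c : gT -> C)
  (D : 'I_N -> gT -> {linear M -> M}) (P : 'S_N -> {linear M -> M})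
  (X Y : 'I_N -> {linear M -> M}) : Prop :=
  (forall (i : 'I_N) (m : M),
     X i (Y i m) - Y i (X i m) =
       m + (k / 2%:R) *: (\sum_(j < N | j != i) \sum_(g in G)
                             P (tperm i j) (D i g (D j (g^-1)%g m)))
         + \sum_(g in G | g != 1%g) c g *: D i g m) /\
  (forall (i j : 'I_N) (u v : 'cV[C]_2) (m : M), i != j ->
     Lop (fun l => X l) (fun l => Y l) i u (Lop (fun l => X l) (fun l => Y l) j v m)
     - Lop (fun l => X l) (fun l => Y l) j v (Lop (fun l => X l) (fun l => Y l) i u m) =
       - (k / 2%:R) *: \sum_(g in G)
           omegaL (rho g *m u) v *: P (tperm i j) (D i g (D j (g^-1)%g m))).

From HB Require Import structures.
From mathcomp Require Import all_boot all_order all_algebra all_fingroup all_solvable all_field.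
From mathcomp Require Import complex reals.
From mathcomp Require Import ring.
Set Implicit Arguments. Unset Strict Implicit. Unset Printing Implicit Defensive.
Import GRing.Theory Num.Theory.
Local Open Scope ring_scope.

(* A nontrivial finite subgroup Gamma of SL(2) has a central element
   z <> 1: if |Gamma| is even, an element of order 2 squares to 1 in SL(2), so it
   is -1; if |Gamma| is odd, squaring is a bijection of Gamma, whence
   sum_g (tr(g)^2 - 1) = |Gamma| and the symmetric square of C^2 has a nonzero
   invariant B. Then Gamma commutes with the nonscalar matrix B omega, hence is
   abelian. The diagonal element (z, ..., z) of Gamma_N is central and of finite
   order, so on the Gamma_N-irreducible M it acts by a scalar mu <> 0, and the
   smash product relation (z, ..., z) u_i (z, ..., z)^-1 = (rho(z) u)_i gives
   ((rho(z) - 1) u)_i = 0. As z <> 1 has finite order in SL(2), rho(z) - 1 is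
   invertible, so every u_i acts by 0. *)

Section Matrix22Entries.
Variable F : comNzRingType.
Implicit Types A B : 'M[F]_2.

Lemma eq_mx22 A B :
  A ord0 ord0 = B ord0 ord0 -> A ord0 ord_max = B ord0 ord_max ->
  A ord_max ord0 = B ord_max ord0 -> A ord_max ord_max = B ord_max ord_max -> A = B.
Proof.
have ord2P (i : 'I_2) : i = ord0 \/ i = ord_max.
  by case: i => [[|[|//]] lti]; [left | right]; apply: val_inj.
move=> e00 e01 e10 e11; apply/matrixP => i j.
by case: (ord2P i) => ->; case: (ord2P j) => ->.
Qed.

Lemma lift0_ord2 (j : 'I_1) : lift ord0 j = ord_max :> 'I_2.
Proof. by apply: val_inj; rewrite /= ord1. Qed.

Lemma liftmax_ord2 (j : 'I_1) : lift ord_max j = ord0 :> 'I_2.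
Proof. by apply: val_inj; rewrite /= ord1. Qed.

Lemma mulmx22E A B i j : (A *m B) i j = A i ord0 * B ord0 j + A i ord_max * B ord_max j.
Proof. by rewrite mxE !big_ord_recl big_ord0 addr0 lift0_ord2. Qed.

Lemma mxtrace_mx22 A : \tr A = A ord0 ord0 + A ord_max ord_max.
Proof. by rewrite /mxtrace !big_ord_recl big_ord0 addr0 lift0_ord2. Qed.

Lemma det_mx22 A : \det A = A ord0 ord0 * A ord_max ord_max - A ord0 ord_max * A ord_max ord0.
Proof.
rewrite (expand_det_row _ ord0) !big_ord_recl big_ord0 /cofactor !det_mx11 !mxE addr0 /=.
rewrite lift0_ord2 /= expr0 expr1 mul1r !mulN1r mulrN.
by congr (_ * A _ _ - _ * A _ _); apply: val_inj.
Qed.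
End Matrix22Entries.

Local Notation mx22E := (mulmx22E, mxtrace_mx22, det_mx22, mxE, eqxx, mulr1n, mulr0n).

Definition omega_mx (F : nzRingType) : 'M[F]_2 := delta_mx ord0 ord_max - delta_mx ord_max ord0.

Section Matrix22.
Variable F : comNzRingType.
Implicit Types A B : 'M[F]_2.

Lemma Cayley_Hamilton_mx22 A : A *m A = \tr A *: A - (\det A)%:M.
Proof. by apply: eq_mx22; rewrite !mx22E /=; ring. Qed.

Lemma mxtrace_sqr_mx22 A : \tr (A *m A) = \tr A ^+ 2 - 2%:R * \det A.
Proof. by rewrite !mx22E /=; ring. Qed.

Lemma det_subr1_mx22 A : \det (A - 1) = \det A - \tr A + 1.
Proof. by rewrite !mx22E /=; ring. Qed.

Lemma adj_mx22 A : \adj A = (\tr A)%:M - A.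
Proof.
by apply: eq_mx22; rewrite !mxE /cofactor !det_mx11 !mxE ?lift0_ord2 ?liftmax_ord2 !mx22E /=; ring.
Qed.

Lemma omega_mx_congr A : A^T *m omega_mx F *m A = \det A *: omega_mx F.
Proof. by apply: eq_mx22; rewrite !mx22E /=; ring. Qed.

Lemma omega_mx_sqr : omega_mx F *m omega_mx F = -1.
Proof. by apply: eq_mx22; rewrite !mx22E /=; ring. Qed.

Lemma tr_omega_mx : (omega_mx F)^T = - omega_mx F.
Proof. by apply: eq_mx22; rewrite !mx22E /=; ring. Qed.

(* The trace of B |-> A B A^T on symmetric matrices, on the basis E00, E11, E01 + E10. *)
Lemma mxtrace_sym2_mx22 A :
  (A *m delta_mx ord0 ord0 *m A^T) ord0 ord0
  + (A *m delta_mx ord_max ord_max *m A^T) ord_max ord_max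
  + (A *m (delta_mx ord0 ord_max + delta_mx ord_max ord0) *m A^T) ord0 ord_max
  = \tr A ^+ 2 - \det A.
Proof. by rewrite !mx22E /=; ring. Qed.
End Matrix22.

Section Matrix22Field.
Variable F : fieldType.
Implicit Types A K : 'M[F]_2.

Lemma minors0_proportional (p q r a b c : F) : [|| p != 0, q != 0 | r != 0] ->
  q * a = p * b -> r * a = p * c -> r * b = q * c ->
  exists l, [/\ a = l * p, b = l * q & c = l * r].
Proof.
have solve (x y u v : F) : x != 0 -> x * v = u * y -> v = y / x * u.
  by move=> x0 e; rewrite mulrAC [y * u]mulrC -e mulrC mulKf.
move=> /or3P[p0|q0|r0] eqa eqc eqb.
- by exists (a / p); split; rewrite ?divfK //; apply: solve; rewrite ?eqa ?eqc.
- by exists (b / q); split; rewrite ?divfK //; apply: solve; rewrite ?eqa ?eqb.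
- by exists (c / r); split; rewrite ?divfK //; apply: solve; rewrite ?eqc ?eqb.
Qed.

Lemma cent_nonscalar_mx22 K A : ~~ is_scalar_mx K -> A *m K = K *m A ->
  exists l mu, A = l *: K + mu%:M.
Proof.
move=> nsK AK.
have commE i j : (A *m K) i j - (K *m A) i j = 0 by rewrite AK subrr.
have := commE ord0 ord0; have := commE ord0 ord_max; have := commE ord_max ord0.
rewrite !mulmx22E => e10 e01 e00.
have [l [Eb Ec Ead]] : exists l, [/\ A ord0 ord_max = l * K ord0 ord_max,
    A ord_max ord0 = l * K ord_max ord0 &
    A ord0 ord0 - A ord_max ord_max = l * (K ord0 ord0 - K ord_max ord_max)].
  apply: minors0_proportional.
  - apply: contraR nsK; rewrite !negb_or !negbK subr_eq0 => /and3P[/eqP q0 /eqP r0 /eqP ps].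
    apply/is_scalar_mxP; exists (K ord0 ord0).
    by apply: eq_mx22; rewrite !mx22E /= ?q0 ?r0 ?ps.
  - by apply/eqP; rewrite -subr_eq0 -e00; apply/eqP; ring.
  - by apply/eqP; rewrite eq_sym -subr_eq0 -e01; apply/eqP; ring.
  - by apply/eqP; rewrite -subr_eq0 -e10; apply/eqP; ring.
exists l, (A ord_max ord_max - l * K ord_max ord_max).
apply: eq_mx22; rewrite !mx22E /= ?Eb ?Ec ?addr0 //; last ring.
by rewrite -[A ord0 ord0](subrK (A ord_max ord_max)) Ead; ring.
Qed.

Lemma comm_cent_nonscalar_mx22 K A B : ~~ is_scalar_mx K ->
  A *m K = K *m A -> B *m K = K *m B -> A *m B = B *m A.
Proof.
move=> nsK AK /(cent_nonscalar_mx22 nsK)[l [mu ->]].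
by rewrite mulmxDr mulmxDl -scalemxAr AK scalemxAl scalar_mxC.
Qed.
End Matrix22Field.

Section Matrix22Num.
Variable F : numFieldType.
Implicit Types A B : 'M[F]_2.

Lemma sym_omega_scalar_eq0 B : B^T = B -> is_scalar_mx (B *m omega_mx F) -> B = 0.
Proof.
move=> symB /is_scalar_mxP[a BJ].
have EB : B = - (a *: omega_mx F).
  by rewrite -mul_scalar_mx -BJ -mulmxA omega_mx_sqr mulmxN mulmx1 opprK.
have : B^T = - B.
  by rewrite {1}EB linearN linearZ /= tr_omega_mx scalerN opprK EB opprK.
rewrite symB => /eqP; rewrite -addr_eq0 -mulr2n -scaler_nat scaler_eq0 pnatr_eq0.
by move=> /eqP.
Qed.

Lemma sqr1_is_scalar_mx22 A : \det A = 1 -> A *m A = 1 -> is_scalar_mx A.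
Proof.
move=> detA AA.
have trA : \tr A *: A = 2%:R%:M.
  by rewrite -[_ *: A](subrK (\det A)%:M) -Cayley_Hamilton_mx22 AA detA mulr2n raddfD.
have tr0 : \tr A != 0.
  apply/eqP => tr0; move: trA; rewrite tr0 scale0r => /matrixP/(_ ord0 ord0).
  by rewrite !mxE eqxx mulr1n => /eqP; rewrite eq_sym pnatr_eq0.
apply/is_scalar_mxP; exists ((\tr A)^-1 * 2%:R).
by rewrite -scale_scalar_mx -trA scalerA mulVf ?scale1r.
Qed.

Lemma unitmx_subr1_mx22 A n : \det A = 1 -> (0 < n)%N -> A ^+ n = 1 -> A != 1 ->
  A - 1 \in unitmx.
Proof.
move=> detA n_gt0 An A1; rewrite unitmxE unitfE det_subr1_mx22 detA.
apply: contraNN A1 => /eqP trA.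
have trA2 : \tr A = 1 + 1 by rewrite -[LHS]addr0 -trA; ring.
have nil : (A - 1) * (A - 1) = 0.
  rewrite mulrBl !mulrBr mulr1 mul1r -mulmxE Cayley_Hamilton_mx22 trA2 detA scalerDl scale1r.
  by apply: eq_mx22; rewrite !mx22E /=; ring.
have nilpotent_pow k : A ^+ k = 1 + k%:R *: (A - 1).
  elim: k => [|k IHk]; first by rewrite expr0 scale0r addr0.
  have AN : A * (A - 1) = A - 1 by rewrite -{1}(subrK 1 A) mulrDl nil add0r mul1r.
  by rewrite exprS IHk mulrDr mulr1 -scalerAr AN mulrS scalerDl scale1r addrA [1 + _]addrC subrK.
move: An; rewrite nilpotent_pow => /(canRL (addKr 1)); rewrite addNr => /eqP.
by rewrite scaler_eq0 pnatr_eq0 subr_eq0 eqn0Ngt n_gt0.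
Qed.
End Matrix22Num.

Section Representation.
Variables (F : numFieldType) (gT : finGroupType) (G : {group gT}) (rho : gT -> 'M[F]_2).
Hypotheses (rho_morph : {in G &, forall g h, rho (g * h)%g = rho g *m rho h})
  (rho_inj : {in G &, injective rho})
  (rho_det : {in G, forall g, \det (rho g) = 1}).

Lemma rho_unitmx g : g \in G -> rho g \in unitmx.
Proof. by move=> Gg; rewrite unitmxE rho_det ?unitr1. Qed.

Lemma rho1 : rho 1%g = 1.
Proof.
have := rho_morph (group1 G) (group1 G); rewrite mulg1 => e.
by rewrite -[RHS](mulVmx (rho_unitmx (group1 G))) {3}e mulKmx ?rho_unitmx.
Qed.

Lemma rhoX g n : g \in G -> rho (g ^+ n)%g = rho g ^+ n.
Proof.
move=> Gg; elim: n => [|n IHn]; first by rewrite expg0 expr0 rho1.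
by rewrite expgS rho_morph ?groupX // IHn mulmxE exprS.
Qed.

Lemma rhoV g : g \in G -> rho (g^-1)%g = \adj (rho g).
Proof.
move=> Gg; have := rho_morph Gg (groupVr Gg); rewrite mulgV rho1 => e.
by rewrite -[LHS](mulKmx (rho_unitmx Gg)) -e mulmx1 /invmx rho_unitmx // rho_det // invr1 scale1r.
Qed.

Lemma rho_eq1 g : g \in G -> (rho g == 1) = (g == 1%g).
Proof.
move=> Gg; apply/eqP/eqP => [|->]; last exact: rho1.
by rewrite -rho1; apply: rho_inj.
Qed.

Lemma mul_rho_sum h : h \in G -> rho h *m \sum_(g in G) rho g = \sum_(g in G) rho g.
Proof.
move=> Gh; rewrite mulmx_sumr [RHS](reindex_inj (mulgI h)) /=.
by apply: eq_big => [g | g Gg]; rewrite ?groupMl ?rho_morph.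
Qed.

Lemma sum_mxtrace_rho : G :!=: 1%g -> \sum_(g in G) \tr (rho g) = 0.
Proof.
case/trivgPn => h Gh h1; set t := \sum_(g in G) _.
have sumV : \sum_(g in G) \adj (rho g) = \sum_(g in G) rho g.
  rewrite [RHS](reindex_inj invg_inj) /=.
  by apply: eq_big => [g | g Gg]; rewrite ?groupV ?rhoV.
have sum2 : \sum_(g in G) rho g + \sum_(g in G) rho g = t%:M.
  rewrite -{2}sumV -big_split raddf_sum /=; apply: eq_bigr => g _.
  by rewrite adj_mx22 addrC subrK.
have := mul_rho_sum Gh; move/(congr1 (fun S => S + S)); rewrite -mulmxDr sum2.
rewrite mul_mx_scalar -scalemx1 => /eqP; rewrite -subr_eq0 -scalerBr scaler_eq0 subr_eq0.
by rewrite rho_eq1 // (negbTE h1) orbF => /eqP.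
Qed.

Lemma sum_sqr_mxtrace_rho : odd #|G| -> G :!=: 1%g ->
  \sum_(g in G) \tr (rho g) ^+ 2 = (2 * #|G|)%:R.
Proof.
move=> oddG ntG.
have trX2 g : g \in G -> \tr (rho (g ^+ 2)%g) = \tr (rho g) ^+ 2 - 2%:R.
  by move=> Gg; rewrite rhoX // expr2 -mulmxE mxtrace_sqr_mx22 rho_det ?mulr1.
have sqr_bij : \sum_(g in G) \tr (rho (g ^+ 2)%g) = \sum_(g in G) \tr (rho g).
  have co2 : coprime #|G| 2 by rewrite coprimen2.
  rewrite [RHS](reindex_onto (fun g => g ^+ 2)%g (fun g => g ^+ expg_invn G 2)%g) /=.
    apply: eq_bigl => g; apply/idP/andP => [Gg | [G2g /eqP <-]]; last by rewrite groupX.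
    by rewrite groupX // expgK.
  by move=> g Gg; rewrite -expgM mulnC expgM expgK.
move: sqr_bij; rewrite sum_mxtrace_rho // (eq_bigr _ trX2) sumrB sumr_const.
by move=> /eqP; rewrite subr_eq0 => /eqP ->; rewrite natrM mulr_natr.
Qed.

Lemma exists_rho_invariant_sym_form : odd #|G| -> G :!=: 1%g ->
  exists B : 'M[F]_2, [/\ B^T = B, B != 0 & {in G, forall h, rho h *m B *m (rho h)^T = B}].
Proof.
move=> oddG ntG; pose avg B := \sum_(g in G) rho g *m B *m (rho g)^T.
have avg_sym B : B^T = B -> (avg B)^T = avg B.
  move=> symB; rewrite raddf_sum; apply: eq_bigr => g _ /=.
  by rewrite !trmx_mul trmxK symB mulmxA.
have avg_inv B : {in G, forall h, rho h *m avg B *m (rho h)^T = avg B}.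
  move=> h Gh; rewrite mulmx_sumr mulmx_suml [RHS](reindex_inj (mulgI h)) /=.
  apply: eq_big => [g | g Gg]; first by rewrite groupMl.
  by rewrite rho_morph // trmx_mul !mulmxA.
pose E00 := delta_mx ord0 ord0 : 'M[F]_2; pose E11 := delta_mx ord_max ord_max : 'M[F]_2.
pose E01 := delta_mx ord0 ord_max + delta_mx ord_max ord0 : 'M[F]_2.
have [sym00 sym11 sym01] : [/\ E00^T = E00, E11^T = E11 & E01^T = E01].
  by rewrite /E00 /E11 /E01 raddfD /= !trmx_delta addrC.
have entries : avg E00 ord0 ord0 + avg E11 ord_max ord_max + avg E01 ord0 ord_max = #|G|%:R.
  rewrite !summxE -!big_split /= (eq_bigr (fun g => \tr (rho g) ^+ 2 - 1)); last first.
    by move=> g Gg; rewrite mxtrace_sym2_mx22 rho_det.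
  by rewrite sumrB sum_sqr_mxtrace_rho // sumr_const mulnC natrM mulr_natr mulr2n addrK.
have [avg00 | ?] := eqVneq (avg E00) 0; last by exists (avg E00); split; rewrite ?avg_sym.
have [avg11 | ?] := eqVneq (avg E11) 0; last by exists (avg E11); split; rewrite ?avg_sym.
exists (avg E01); split; rewrite ?avg_sym //.
apply: contra_eq_neq entries => ->; rewrite avg00 avg11 !mxE !add0r eq_sym.
by rewrite pnatr_eq0 -lt0n cardG_gt0.
Qed.

Lemma odd_rho_abelian : odd #|G| -> G :!=: 1%g -> {in G &, forall g h, commute g h}.
Proof.
move=> oddG ntG; have [B [symB nzB invB]] := exists_rho_invariant_sym_form oddG ntG.
set K := B *m omega_mx F.
have rhoK h : h \in G -> rho h *m K = K *m rho h.
  move=> Gh; have := omega_mx_congr (rho h); rewrite rho_det // scale1r => omegaJ.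
  by rewrite /K -{1}omegaJ !mulmxA invB.
have nsK : ~~ is_scalar_mx K by apply: contra_neqN nzB => /(sym_omega_scalar_eq0 symB).
move=> g h Gg Gh; apply: rho_inj; rewrite ?groupM // !rho_morph //.
exact: comm_cent_nonscalar_mx22 nsK (rhoK _ Gg) (rhoK _ Gh).
Qed.

Lemma exists_nontrivial_central : G :!=: 1%g ->
  exists2 z, z \in G /\ z != 1%g & {in G, forall h, commute z h}.
Proof.
move=> ntG; have [z Gz z1] := trivgPn _ ntG.
case oddG : (odd #|G|).
  by exists z => // h; apply: odd_rho_abelian.
have [t Gt ord_t] : {t | t \in G & #[t]%g = 2%N} by apply: Cauchy; rewrite // dvdn2 oddG.
have t1 : t != 1%g by apply: contra_eqN ord_t => /eqP ->; rewrite order1.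
exists t => // h Gh; apply: rho_inj; rewrite ?groupM // !rho_morph //.
have /is_scalar_mxP[a ->] : is_scalar_mx (rho t).
  apply: sqr1_is_scalar_mx22; first exact: rho_det.
  have tt : (t * t = 1)%g by rewrite -{2}(expg1 t) -expgS -ord_t expg_order.
  by rewrite -rho_morph // tt rho1.
by rewrite scalar_mxC.
Qed.

Lemma unitmx_rho_subr1 z : z \in G -> z != 1%g -> rho z - 1 \in unitmx.
Proof.
move=> Gz z1; apply: (@unitmx_subr1_mx22 _ _ #[z]%g); rewrite ?rho_det ?order_gt0 //.
  by rewrite -rhoX // expg_order rho1.
by rewrite rho_eq1.
Qed.
End Representation.

Lemma closed_prim_root_exists (F : closedFieldType) n : (0 < n)%N -> n%:R != 0 :> F ->
  exists w : F, n.-primitive_root w.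
Proof.
move=> n_gt0 n_neq0; have [r Dp] := closed_field_poly_normal ('X^n - 1 : {poly F}).
rewrite (monicP _) ?monicXnsubC // scale1r in Dp.
have rn1 : all n.-unity_root r by apply/allP => z; rewrite -root_prod_XsubC -Dp.
have sz_r : (n < (size r).+1)%N by rewrite -(size_prod_XsubC r id) -Dp size_XnsubC.
have [|w] := hasP (has_prim_root n_gt0 rn1 _ sz_r); last by exists w.
by rewrite -separable_prod_XsubC -Dp separable_Xn_sub_1.
Qed.

Lemma sum_expr_unity_root_eq0 (F : fieldType) (c : F) n : c ^+ n = 1 -> c != 1 ->
  \sum_(j < n) c ^+ j = 0.
Proof.
move=> cn c1; have := subrX1 c n; rewrite cn subrr => /esym/eqP.
by rewrite mulf_eq0 subr_eq0 (negbTE c1) => /eqP.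
Qed.

Section FiniteOrderEigenvector.
Variables (F : fieldType) (M : lmodType F) (f : {linear M -> M}) (n : nat) (w : F).
Hypotheses (w_prim : n.-primitive_root w) (n_neq0 : n%:R != 0 :> F)
  (f_order : forall v, iter n f v = v).

(* proj j m is n times the component of m in the w^-j eigenspace of f. *)
Let proj (j : nat) (m : M) := \sum_(k < n) (w ^+ j) ^+ k *: iter k f m.

Lemma proj_eigen j m : w ^+ j *: f (proj j m) = proj j m.
Proof.
set c := w ^+ j; have cn : c ^+ n = 1 by rewrite /c exprAC (prim_expr_order w_prim) expr1n.
pose t k := c ^+ k *: iter k f m.
have -> : w ^+ j *: f (proj j m) = \sum_(k < n) t k.+1.
  rewrite linear_sum scaler_sumr; apply: eq_bigr => k _.
  by rewrite linearZ scalerA -exprS.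
have tn : t n = t 0%N by rewrite /t cn f_order expr0.
apply: (addrI (t 0%N)); transitivity (\sum_(k < n.+1) t k); first by rewrite big_ord_recl.
by rewrite big_ord_recr /= tn addrC.
Qed.

Lemma sum_proj m : \sum_(j < n) proj j m = n%:R *: m.
Proof.
have n_gt0 := prim_order_gt0 w_prim.
pose t k := (\sum_(j < n) (w ^+ k) ^+ j) *: iter k f m.
rewrite exchange_big /= (eq_bigr (fun k : 'I_n => t k)); last first.
  by move=> k _; rewrite /t scaler_suml; apply: eq_bigr => j _; rewrite exprAC.
rewrite -(big_mkord xpredT t) (big_ltn n_gt0) /= /t.
rewrite [X in _ + X]big_nat_cond [X in _ + X]big1 ?addr0 => [|k /andP[/andP[k_gt0 k_lt_n] _]].
  by rewrite expr0; under eq_bigr do rewrite expr1n; rewrite sumr_const card_ord.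
rewrite sum_expr_unity_root_eq0 ?scale0r //.
  by rewrite exprAC (prim_expr_order w_prim) expr1n.
by rewrite -(expr0 w) (eq_prim_root_expr w_prim) mod0n modn_small // -lt0n.
Qed.

Lemma eigenvector_of_finite_order (m : M) : m != 0 ->
  exists (mu : F) (v : M), [/\ mu != 0, v != 0 & f v = mu *: v].
Proof.
move=> m_neq0.
have [j proj_neq0] : exists j : 'I_n, proj j m != 0.
  apply/existsP; apply: contraR m_neq0; rewrite negb_exists => /forallP proj0.
  rewrite -(scalerK n_neq0 m) -sum_proj big1 ?scaler0 // => j _.
  by apply/eqP; rewrite -[_ == _]negbK proj0.
have wj_neq0 : w ^+ j != 0.
  by rewrite expf_neq0 // (prim_root_eq0 w_prim) -lt0n (prim_order_gt0 w_prim).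
exists (w ^+ j)^-1, (proj j m); split; rewrite ?invr_eq0 //.
by rewrite -{2}(proj_eigen j m) scalerA mulVf // scale1r.
Qed.
End FiniteOrderEigenvector.

Section LopLinear.
Variables (F : comNzRingType) (M : lmodType F) (N : nat) (X Y : 'I_N -> M -> M).

Lemma LopB i u v m : Lop X Y i (u - v) m = Lop X Y i u m - Lop X Y i v m.
Proof. by rewrite /Lop !mxE !scalerBl opprD !addrA [_ - _ + _]addrAC. Qed.

Lemma Lop_delta0 i m : Lop X Y i (delta_mx ord0 ord0) m = X i m.
Proof. by rewrite /Lop !mxE /= scale1r scale0r addr0. Qed.

Lemma Lop_delta1 i m : Lop X Y i (delta_mx ord_max ord0) m = Y i m.
Proof. by rewrite /Lop !mxE /= scale1r scale0r add0r. Qed.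
End LopLinear.

Lemma LopZ (F : comNzRingType) (M : lmodType F) N (X Y : 'I_N -> {linear M -> M}) i u a m :
  Lop (fun l => X l) (fun l => Y l) i u (a *: m) = a *: Lop (fun l => X l) (fun l => Y l) i u m.
Proof. by rewrite /Lop !linearZ /= scalerDr !scalerA mulrC [a * _]mulrC. Qed.

Section GammaNModule.
Variables (F : comNzRingType) (M : lmodType F) (N : nat) (gT : finGroupType) (G : {group gT})
  (D : 'I_N -> gT -> {linear M -> M}) (P : 'S_N -> {linear M -> M}).
Hypothesis GN_rep : is_GammaN_rep G D P.

Let D1 : forall i m, D i 1%g m = m.
Proof. by case: GN_rep. Qed.
Let DM : forall i, {in G &, forall g h m, D i (g * h)%g m = D i g (D i h m)}.
Proof. by case: GN_rep => _ []. Qed.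
Let D_comm : forall i j, i != j -> {in G &, forall g h m, D i g (D j h m) = D j h (D i g m)}.
Proof. by case: GN_rep => _ [] _ []. Qed.
Let P_D : forall s i, {in G, forall g m, P s (D (s i) g m) = D i g (P s m)}.
Proof. by case: GN_rep => _ [] _ [] _ [] _ []. Qed.

(* Dseq l g is the action of the element of Gamma^N with g in the coordinates listed
   in l and 1 elsewhere. *)
Definition Dseq (l : seq 'I_N) (g : gT) (m : M) : M := foldr (fun j => D j g) m l.

Lemma Dseq1 l m : Dseq l 1%g m = m.
Proof. by elim: l => [//|j l IHl] /=; rewrite IHl D1. Qed.

Lemma Dseq_D_notin l j g h m : g \in G -> h \in G -> j \notin l ->
  Dseq l g (D j h m) = D j h (Dseq l g m).
Proof.
move=> Gg Gh; elim: l => [//|k l IHl] /=; rewrite inE negb_or => /andP[jk jl].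
by rewrite IHl // D_comm // eq_sym.
Qed.

Lemma DseqM l g h m : uniq l -> g \in G -> h \in G ->
  Dseq l g (Dseq l h m) = Dseq l (g * h)%g m.
Proof.
move=> + Gg Gh; elim: l => [//|j l IHl] /= /andP[jl ul].
by rewrite Dseq_D_notin // IHl // DM.
Qed.

Lemma Dseq_perm l l' g m : g \in G -> perm_eq l l' -> Dseq l g m = Dseq l' g m.
Proof.
move=> Gg; elim: l l' => [|j l IHl] l' ll'; first by move: (perm_size ll') => /esym/size0nil ->.
have jl' : j \in l' by rewrite -(perm_mem ll') mem_head.
have Dseq_rem k l'' : k \in l'' -> Dseq l'' g m = D k g (Dseq (rem k l'') g m).
  elim: l'' => [//|k' l'' IH]; rewrite inE /=.
  by case: eqVneq => [-> _ //| kk' /= kl'']; rewrite IH // D_comm // eq_sym.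
rewrite [RHS](Dseq_rem j) //=; congr (D j g _); apply: IHl.
by rewrite -(perm_cons j) (perm_trans ll') // perm_to_rem.
Qed.

Lemma P_Dseq s l g m : g \in G -> P s (Dseq l g m) = Dseq (map (s^-1)%g l) g (P s m).
Proof. by move=> Gg; elim: l => [//|j l IHl] /=; rewrite -IHl -P_D // permKV. Qed.

Definition Ddiag (g : gT) : M -> M := Dseq (enum 'I_N) g.

Lemma Ddiag_is_linear g : linear (Ddiag g).
Proof.
by move=> a u v; rewrite /Ddiag; elim: (enum _) => [//|j l IHl] /=; rewrite IHl linearP.
Qed.

Lemma Ddiag_D_comm z h i m : z \in G -> h \in G -> commute z h ->
  Ddiag z (D i h m) = D i h (Ddiag z m).
Proof.
move=> Gz Gh zh; rewrite /Ddiag; elim: (enum _) => [//|j l IHl] /=; rewrite IHl.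
by case: (eqVneq j i) => [->|ji]; [rewrite -!DM // zh | rewrite D_comm].
Qed.

Lemma iter_Ddiag g n m : g \in G -> iter n (Ddiag g) m = Ddiag (g ^+ n)%g m.
Proof.
move=> Gg; elim: n => [|n IHn]; first by rewrite expg0 /Ddiag Dseq1.
by rewrite iterS IHn /Ddiag DseqM ?enum_uniq ?groupX // -expgS.
Qed.

Lemma P_Ddiag s g m : g \in G -> P s (Ddiag g m) = Ddiag g (P s m).
Proof.
move=> Gg; rewrite /Ddiag P_Dseq //; apply: Dseq_perm => //.
apply: uniq_perm; rewrite ?enum_uniq //.
  by rewrite map_inj_uniq ?enum_uniq //; apply: perm_inj.
by move=> i; rewrite mem_enum; apply/mapP; exists (s i); rewrite ?mem_enum ?permK.
Qed.

Section Smash.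
Variables (rho : gT -> 'M[F]_2) (X Y : 'I_N -> {linear M -> M}).
Hypothesis smash : smash_relations G rho D P X Y.
Local Notation L := (Lop (fun l => X l) (fun l => Y l)).

Lemma Dseq_Lop l g i u m : uniq l -> g \in G ->
  Dseq l g (L i u m) = L i (if i \in l then rho g *m u else u) (Dseq l g m).
Proof.
move=> + Gg; elim: l => [//|j l IHl] /= /andP[jl ul].
rewrite IHl // smash.1 // inE; case: (eqVneq i j) => [->|] //=.
by rewrite (negbTE jl).
Qed.

Lemma Ddiag_Lop g i u m : g \in G -> Ddiag g (L i u m) = L i (rho g *m u) (Ddiag g m).
Proof. by move=> Gg; rewrite /Ddiag Dseq_Lop ?enum_uniq ?mem_enum. Qed.
End Smash.
End GammaNModule.

Section IrreducibleModule.
Variables (F : numClosedFieldType) (M : lmodType F) (N : nat) (gT : finGroupType)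
  (G : {group gT}) (rho : gT -> 'M[F]_2)
  (D : 'I_N -> gT -> {linear M -> M}) (P : 'S_N -> {linear M -> M})
  (X Y : 'I_N -> {linear M -> M}).
Hypotheses (GN_rep : is_GammaN_rep G D P) (smash : smash_relations G rho D P X Y)
  (GN_irr : GammaN_irreducible G D P).
Variable z : gT.
Hypotheses (Gz : z \in G) (z_central : {in G, forall h, commute z h}).
Local Notation L := (Lop (fun l => X l) (fun l => Y l)).

Lemma Ddiag_central_scalar : exists2 mu : F, mu != 0 & forall m, Ddiag D z m = mu *: m.
Proof.
pose Z : {linear M -> M} :=
  HB.pack (Ddiag D z) (GRing.isLinear.Build _ _ _ _ (Ddiag D z) (Ddiag_is_linear D z)).
have ord_neq0 : #[z]%g%:R != 0 :> F by rewrite pnatr_eq0 -lt0n order_gt0.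
have [w w_prim] := closed_prim_root_exists (order_gt0 z) ord_neq0.
have Z_order v : iter #[z]%g Z v = v.
  by rewrite (iter_Ddiag GN_rep) // expg_order /Ddiag (Dseq1 GN_rep).
have [m0 /eqP m0_neq0] := GN_irr.1.
have [mu [v [mu_neq0 v_neq0 Zv]]] := eigenvector_of_finite_order w_prim ord_neq0 Z_order m0_neq0.
exists mu => //; pose S m := Ddiag D z m = mu *: m.
have S_sub : is_subspace S.
  split=> [|a u u' Su Su']; first by rewrite /S scaler0; apply: (linear0 Z).
  by rewrite /S (Ddiag_is_linear D) Su Su' scalerDr !scalerA mulrC.
have S_D i g m : g \in G -> S m -> S (D i g m).
  rewrite /S => Gg Sm; rewrite (Ddiag_D_comm GN_rep) ?Sm ?linearZ //; exact: z_central.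
have S_P s m : S m -> S (P s m) by rewrite /S => Sm; rewrite -(P_Ddiag GN_rep) // Sm linearZ.
case: (GN_irr.2 S S_sub S_D S_P) => // S0.
by move/eqP: v_neq0; rewrite (S0 v Zv).
Qed.

Hypothesis z_unitmx : rho z - 1 \in unitmx.

Lemma Lop_eq0 i u m : L i u m = 0.
Proof.
have [mu mu_neq0 Zmu] := Ddiag_central_scalar.
have L_sub1 v w : L i ((rho z - 1) *m v) w = 0.
  apply: (scalerI mu_neq0); rewrite scaler0 mulmxBl mul1mx LopB scalerBr -LopZ -Zmu.
  by rewrite -(Ddiag_Lop smash) // Zmu subrr.
by rewrite -(mulKVmx z_unitmx u) L_sub1.
Qed.

Lemma X_Y_eq0 i m : X i m = 0 /\ Y i m = 0.
Proof.
rewrite -(Lop_delta0 (fun l => X l) (fun l => Y l)).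
by rewrite -(Lop_delta1 (fun l => X l) (fun l => Y l)) !Lop_eq0.
Qed.
End IrreducibleModule.

Theorem theorem4p1 (R : realType) (gT : finGroupType) (G : {group gT})
  (rho : gT -> 'M[R[i]]_2)
  (rho_morph : {in G &, forall g h, rho (g * h)%g = rho g *m rho h})
  (rho_inj : {in G &, injective rho})
  (rho_det : {in G, forall g, \det (rho g) = 1})
  (G_nontriv : G :!=: 1%G)
  (k : R[i]) (c : gT -> R[i])
  (c_class : {in G &, forall g h, g != 1%g -> c (g ^ h)%g = c g})
  (N : nat) (M : lmodType R[i])
  (D : 'I_N -> gT -> {linear M -> M}) (P : 'S_N -> {linear M -> M})
  (X Y : 'I_N -> {linear M -> M})
  (HGN : is_GammaN_rep G D P)
  (Hsmash : smash_relations G rho D P X Y)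
  (HH : H_relations G rho k c D P X Y)
  (Hirr : GammaN_irreducible G D P) :
  forall (i : 'I_N) (m : M), X i m = 0 /\ Y i m = 0.
Proof.
have [z [Gz z_neq1] z_central] := exists_nontrivial_central rho_morph rho_inj rho_det G_nontriv.
have z_unitmx := unitmx_rho_subr1 rho_morph rho_inj rho_det Gz z_neq1.
exact: (X_Y_eq0 HGN Hsmash Hirr Gz z_central z_unitmx).
Qed.
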